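(* Let $(\mathcal H,\|\cdot\|)$ be a Hilbert space and $q$ a (not necessarily positive) quadratic form, semi-bounded from below, with domain $\mathcal D$ dense in $\mathcal H$ and with discrete spectrum $\nu_1\le\nu_2\le\dots$ (repeated according to multiplicity), and let $\{g_i\}_{i\ge1}$ be an orthonormal basis of $\mathcal H$ of eigenvectors of $q$, $g_i$ associated with $\nu_i$. Let $N,m$ be positive integers, $F$ an $m$-dimensional subspace of $\mathcal D$, and $\xi^F_1\le\dots\le\xi^F_m$ the eigenvalues of the restriction of $q$ to $F$ (with respect to the inner product of $\mathcal H$). Assume there exist constants $\gamma,\delta>0$ such that: (H1) $0<\delta<\gamma/\sqrt2$; (H2) $|\nu_{N+i-1}|\le\gamma$ for all $i\in\{1,\dots,m\}$, $\nu_{N+m}\ge\gamma$ and, if $N\ge2$, $\nu_{N-1}\le-\gamma$; (H3) $|q(\varphi,g)|\le\delta\|\varphi\|\,\|g\|$ for all $g\in\mathcal D$ and $\varphi\in F$ (where $q(\cdot,\cdot)$ is the associated symmetric bilinear form). Then: (i) $|\nu_{N+i-1}-\xi_i^F|\le\frac4\gamma\delta^2$ for all $i=1,\dots,m$; (ii) $\|\Pi_N-\mathbb I\|_{\mathcal L(F,\mathcal H)}\le\sqrt2\,\delta/\gamma$, where $\Pi_N$ is the orthogonal projection onto $\mathrm{span}\{g_N,\dots,g_{N+m-1}\}$. *)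

From HB Require Import structures.
From mathcomp Require Import all_boot all_order all_algebra.
From mathcomp Require Import reals.

Set Implicit Arguments.
Unset Strict Implicit.
Unset Printing Implicit Defensive.

Import Order.TTheory GRing.Theory Num.Theory.
Local Open Scope ring_scope.

Section HilbertDefs.
Context {R : realType} {V : lmodType R}.

Definition inner_product (ip : V -> V -> R) : Prop :=
  [/\ forall x y, ip x y = ip y x,
      forall a x y z, ip (a *: x + y) z = a * ip x z + ip y z &
      forall x, x != 0 -> 0 < ip x x].

Definition hnorm (ip : V -> V -> R) (x : V) : R := Num.sqrt (ip x x).

Definition converges_to (ip : V -> V -> R) (u : nat -> V) (x : V) : Prop :=
  forall eps : R, 0 < eps ->
    exists N : nat, forall n : nat, (N <= n)%N -> hnorm ip (u n - x) < eps.

Definition cauchy_seq (ip : V -> V -> R) (u : nat -> V) : Prop :=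
  forall eps : R, 0 < eps -> exists N : nat, forall n p : nat,
    (N <= n)%N -> (N <= p)%N -> hnorm ip (u n - u p) < eps.

Definition complete (ip : V -> V -> R) : Prop :=
  forall u : nat -> V, cauchy_seq ip u -> exists x, converges_to ip u x.

Definition hilbert_space (ip : V -> V -> R) : Prop :=
  inner_product ip /\ complete ip.

Definition subspace (D : V -> Prop) : Prop :=
  D 0 /\ forall (a : R) x y, D x -> D y -> D (a *: x + y).

Definition dense (ip : V -> V -> R) (D : V -> Prop) : Prop :=
  forall x (eps : R), 0 < eps -> exists y, D y /\ hnorm ip (x - y) < eps.

Definition sym_bilinear_on (D : V -> Prop) (q : V -> V -> R) : Prop :=
  (forall x y, D x -> D y -> q x y = q y x) /\
  (forall a x y z, D x -> D y -> D z -> q (a *: x + y) z = a * q x z + q y z).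

Definition semibounded_below (ip : V -> V -> R) (D : V -> Prop)
  (q : V -> V -> R) : Prop :=
  exists c : R, forall u, D u -> c * ip u u <= q u u.

Definition closed_form (ip : V -> V -> R) (D : V -> Prop)
  (q : V -> V -> R) : Prop :=
  forall (u : nat -> V) (x : V), (forall n, D (u n)) -> converges_to ip u x ->
    (forall eps : R, 0 < eps -> exists N : nat, forall n p : nat,
        (N <= n)%N -> (N <= p)%N -> q (u n - u p) (u n - u p) < eps) ->
    D x /\ (forall eps : R, 0 < eps -> exists N : nat, forall n : nat,
        (N <= n)%N -> q (u n - x) (u n - x) < eps).

(* orthonormal basis (g_i)_{i >= 1}, indexed from 1 as in the paper *)
Definition orthonormal_basis (ip : V -> V -> R) (g : nat -> V) : Prop :=
  (forall i j : nat, (1 <= i)%N -> (1 <= j)%N -> ip (g i) (g j) = (i == j)%:R) /\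
  (forall x, converges_to ip (fun n => \sum_(1 <= i < n) ip x (g i) *: g i) x).

Definition form_eigvec (ip : V -> V -> R) (D : V -> Prop) (q : V -> V -> R)
  (v : V) (lam : R) : Prop :=
  D v /\ forall phi, D phi -> q v phi = lam * ip v phi.

Definition proj_span (ip : V -> V -> R) (g : nat -> V) (N m : nat) (x : V) : V :=
  \sum_(N <= i < N + m) ip x (g i) *: g i.

Definition span_fam (m : nat) (f : 'I_m -> V) (x : V) : Prop :=
  exists c : 'I_m -> R, x = \sum_(j < m) c j *: f j.

End HilbertDefs.

From HB Require Import structures.
From mathcomp Require Import all_boot all_order all_algebra.
From mathcomp Require Import reals.
From mathcomp Require Import ring lra zify.
Import Order.TTheory GRing.Theory Num.Theory.
Local Open Scope ring_scope.

(* Write x = Pi x + r for x in F, where Pi projects onto span{g_N, ..., g_(N+m-1)}.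
   Testing (H3) against h = sum of nu_k <x, g_k> g_k over the indices k outside the window
   gives sum (nu_k <x, g_k>)^2 <= delta^2 |x|^2, and the spectral gap (H2) turns this into
   gamma |r| <= delta |x|, which is (ii).  As q(Pi x, r) = 0, also
   gamma |q(x, x) - q(Pi x, Pi x)| <= delta^2 |x|^2, so the Rayleigh quotients of x and Pi x
   differ by at most 4 delta^2 / gamma.  Finally a nonzero x in F satisfying m - 1 linear
   constraints (min-max) compares xi_i with nu_(N+i-1) in each direction. *)

Section InnerProduct.
Context {R : realType} {V : lmodType R} {ip : V -> V -> R}.
Hypothesis ipP : inner_product ip.

Lemma ipC x y : ip x y = ip y x.
Proof. by case: ipP. Qed.

Lemma ip0l z : ip 0 z = 0.
Proof. by case: ipP => _ lin _; move: (lin 1 0 0 z); rewrite scale1r addr0 mul1r; lra. Qed.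

Lemma ipDl x y z : ip (x + y) z = ip x z + ip y z.
Proof. by case: ipP => _ lin _; rewrite -(scale1r x) lin mul1r scale1r. Qed.

Lemma ipZl a x z : ip (a *: x) z = a * ip x z.
Proof. by case: ipP => _ lin _; rewrite -(addr0 (a *: x)) lin ip0l addr0. Qed.

Lemma ipNl x z : ip (- x) z = - ip x z.
Proof. by rewrite -scaleN1r ipZl mulN1r. Qed.

Lemma ipBl x y z : ip (x - y) z = ip x z - ip y z.
Proof. by rewrite ipDl ipNl. Qed.

Lemma ipNN x : ip (- x) (- x) = ip x x.
Proof. by rewrite ipNl ipC ipNl opprK. Qed.

Lemma hnormN x : hnorm ip (- x) = hnorm ip x.
Proof. by rewrite /hnorm ipNN. Qed.

Lemma ip_ge0 x : 0 <= ip x x.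
Proof.
have [->|x0] := eqVneq x 0; first by rewrite ip0l.
by case: ipP => _ _ /(_ x x0) /ltW.
Qed.

Lemma hnorm_sq x : hnorm ip x ^+ 2 = ip x x.
Proof. by rewrite sqr_sqrtr ?ip_ge0. Qed.

Lemma ip_suml (I : Type) (r : seq I) (a : I -> R) (v : I -> V) z :
  ip (\sum_(i <- r) a i *: v i) z = \sum_(i <- r) a i * ip (v i) z.
Proof.
elim: r => [|i r IHr]; first by rewrite !big_nil ip0l.
by rewrite !big_cons ipDl ipZl IHr.
Qed.

Lemma ip_sumr (I : Type) (r : seq I) (a : I -> R) (v : I -> V) z :
  ip z (\sum_(i <- r) a i *: v i) = \sum_(i <- r) a i * ip z (v i).
Proof. by rewrite ipC ip_suml; apply: eq_bigr => i _; rewrite ipC. Qed.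

Section OrthonormalFamily.
Context {I : eqType} {e : I -> V} {r : seq I}.
Hypotheses (r_uniq : uniq r)
  (e_orthonormal : {in r &, forall i j, ip (e i) (e j) = (i == j)%:R}).

Lemma ip_sum_orthonormal (a : I -> R) k : k \in r ->
  ip (\sum_(i <- r) a i *: e i) (e k) = a k.
Proof.
move=> kr; rewrite ip_suml (bigD1_seq k) //= e_orthonormal // eqxx mulr1.
rewrite big_seq_cond big1 ?addr0 // => i /andP [ir ik].
by rewrite e_orthonormal // (negbTE ik) mulr0.
Qed.

Lemma ip_sum_orthonormal2 (a b : I -> R) :
  ip (\sum_(i <- r) a i *: e i) (\sum_(i <- r) b i *: e i) =
  \sum_(i <- r) a i * b i.
Proof.
rewrite ip_sumr big_seq [RHS]big_seq; apply: eq_bigr => i ir.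
by rewrite ip_sum_orthonormal // mulrC.
Qed.

Lemma ip_sum_orthonormal_sq (a : I -> R) :
  ip (\sum_(i <- r) a i *: e i) (\sum_(i <- r) a i *: e i) = \sum_(i <- r) a i ^+ 2.
Proof. by rewrite ip_sum_orthonormal2; apply: eq_bigr => i _; rewrite expr2. Qed.

Lemma ip_sub_proj_orthonormal x k : k \in r ->
  ip (x - \sum_(i <- r) ip x (e i) *: e i) (e k) = 0.
Proof. by move=> kr; rewrite ipBl ip_sum_orthonormal // subrr. Qed.

Lemma ip_sub_proj_orthonormal_sq x :
  ip (x - \sum_(i <- r) ip x (e i) *: e i) (x - \sum_(i <- r) ip x (e i) *: e i) =
  ip x x - \sum_(i <- r) ip x (e i) ^+ 2.
Proof.
set P := \sum_(i <- r) _; have xP : ip P x = ip P P.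
  by rewrite ipC ip_sumr ip_sum_orthonormal2; apply: eq_bigr => i _; exact: mulrC.
have Pr : ip P (x - P) = 0.
  rewrite ip_suml big1_seq // => i /andP [_ ir].
  by rewrite (ipC (e i)) ip_sub_proj_orthonormal ?mulr0.
by rewrite ipBl Pr subr0 ipC ipBl xP ip_sum_orthonormal_sq.
Qed.

End OrthonormalFamily.
End InnerProduct.

Definition rayleigh {R : numFieldType} {V : Type} (ip q : V -> V -> R) (x : V) : R :=
  q x x / ip x x.

Lemma le_rayleigh {R : numFieldType} {V : Type} (ip q : V -> V -> R) x lam :
  0 < ip x x -> (lam <= rayleigh ip q x) = (lam * ip x x <= q x x).
Proof. exact: ler_pdivlMr. Qed.

Lemma rayleigh_le {R : numFieldType} {V : Type} (ip q : V -> V -> R) x lam :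
  0 < ip x x -> (rayleigh ip q x <= lam) = (q x x <= lam * ip x x).
Proof. exact: ler_pdivrMr. Qed.

Section Form.
Context {R : realType} {V : lmodType R} {D : V -> Prop} {q : V -> V -> R}.
Hypotheses (D_subspace : subspace D) (q_sym_bilinear : sym_bilinear_on D q).

Lemma subspace0 : D 0.
Proof. by case: D_subspace. Qed.

Lemma subspaceD x y : D x -> D y -> D (x + y).
Proof. by case: D_subspace => _ lin Dx Dy; rewrite -(scale1r x); apply: lin. Qed.

Lemma subspaceZ a x : D x -> D (a *: x).
Proof. by case: D_subspace => D0 lin Dx; rewrite -[_ *: _]addr0; apply: lin. Qed.

Lemma subspaceB x y : D x -> D y -> D (x - y).
Proof. by move=> Dx Dy; rewrite -scaleN1r; apply/subspaceD/subspaceZ. Qed.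

Lemma subspace_sum (I : eqType) (r : seq I) (a : I -> R) (v : I -> V) :
  {in r, forall i, D (v i)} -> D (\sum_(i <- r) a i *: v i).
Proof.
elim: r => [|i r IHr] Dv; first by rewrite big_nil; exact: subspace0.
rewrite big_cons; apply: subspaceD; first by apply/subspaceZ/Dv; rewrite inE eqxx.
by apply: IHr => j jr; apply: Dv; rewrite inE jr orbT.
Qed.

Lemma formC x y : D x -> D y -> q x y = q y x.
Proof. by case: q_sym_bilinear => sym _; apply: sym. Qed.

Lemma form0l z : D z -> q 0 z = 0.
Proof.
case: q_sym_bilinear => _ lin Dz; move: (lin 1 0 0 z subspace0 subspace0 Dz).
by rewrite scale1r addr0 mul1r; lra.
Qed.

Lemma formDl x y z : D x -> D y -> D z -> q (x + y) z = q x z + q y z.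
Proof.
by case: q_sym_bilinear => _ lin Dx Dy Dz; rewrite -(scale1r x) lin // mul1r scale1r.
Qed.

Lemma formZl a x z : D x -> D z -> q (a *: x) z = a * q x z.
Proof.
case: q_sym_bilinear => _ lin Dx Dz; have D0 := subspace0.
by rewrite -(addr0 (a *: x)) lin // form0l // addr0.
Qed.

Lemma form_suml (I : eqType) (r : seq I) (a : I -> R) (v : I -> V) z :
  {in r, forall i, D (v i)} -> D z ->
  q (\sum_(i <- r) a i *: v i) z = \sum_(i <- r) a i * q (v i) z.
Proof.
elim: r => [|i r IHr] Dv Dz; first by rewrite !big_nil form0l.
have Dvr : {in r, forall j, D (v j)} by move=> j jr; apply: Dv; rewrite inE jr orbT.
have Dvi : D (v i) by apply: Dv; rewrite inE eqxx.
by rewrite !big_cons formDl ?formZl ?IHr //; [exact: subspaceZ | exact: subspace_sum].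
Qed.

End Form.

Lemma le_sqr_of_le_mul_sqrt (R : rcfType) (s c : R) :
  0 <= c -> s <= c * Num.sqrt s -> s <= c ^+ 2.
Proof.
move=> c0 hs; case: (lerP s 0) => [s0|s_gt0]; first exact: le_trans s0 (sqr_ge0 c).
have rs_gt0 : 0 < Num.sqrt s by rewrite sqrtr_gt0.
have ss : Num.sqrt s ^+ 2 = s by rewrite sqr_sqrtr ?ltW.
have rs_le : Num.sqrt s <= c by rewrite -(ler_pM2r rs_gt0) -expr2 ss.
by rewrite -[leLHS]ss ler_pXn2r // nnegrE ltW.
Qed.

Lemma index_iota_gt0 lo hi : (0 < lo)%N -> {in index_iota lo hi, forall k, 0 < k}%N.
Proof. by move=> lo_gt0 k; rewrite mem_index_iota => /andP [/(leq_trans lo_gt0)]. Qed.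

Lemma big_nat_shift (V : nmodType) (F : nat -> V) N m :
  \sum_(N <= k < N + m) F k = \sum_(l < m) F (N + l)%N.
Proof.
by rewrite -{1}[N]add0n big_addn addKn big_mkord; apply: eq_bigr => l _; rewrite addnC.
Qed.

Lemma big_nat_window (V : nmodType) (F : nat -> V) lo N m n :
  (lo <= N)%N -> (N + m <= n)%N ->
  \sum_(lo <= k < n | (N <= k < N + m)%N) F k = \sum_(N <= k < N + m) F k.
Proof.
move=> loN Nmn; have NNm : (N <= N + m)%N by rewrite leq_addr.
rewrite (big_cat_nat loN (leq_trans NNm Nmn)) (big_cat_nat NNm Nmn) /=.
have below : \sum_(lo <= k < N | (N <= k < N + m)%N) F k = 0.
  by rewrite big_nat_cond big_pred0 // => k; lia.
have above : \sum_(N + m <= k < n | (N <= k < N + m)%N) F k = 0.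
  by rewrite big_nat_cond big_pred0 // => k; lia.
by rewrite below above add0r addr0 [RHS]big_nat_cond; apply: eq_bigl => k; rewrite andbT.
Qed.

Lemma exists_nonzero_sol_except {F : fieldType} {m : nat}
  (L : 'I_m -> 'I_m -> F) (i : 'I_m) :
  exists2 c : 'I_m -> F, exists j, c j != 0 &
    forall t, t != i -> \sum_j c j * L t j = 0.
Proof.
case: m L i => [|n] L i; first by case: i.
pose M := \matrix_(j < n.+1, t < n) L (lift i t) j.
have : kermx M != 0.
  by rewrite -mxrank_eq0 mxrank_ker subn_eq0 -ltnNge (leq_ltn_trans (rank_leq_col M)).
case/rowV0Pn => v /sub_kermxP vM v_neq0; exists (fun j => v 0 j).
  case: (pickP (fun j => v 0 j != 0)) => [j vj|v_eq0]; first by exists j.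
  by case/eqP: v_neq0; apply/rowP => j; rewrite mxE; move/negbFE/eqP: (v_eq0 j).
move=> t; case: (unliftP i t) => [t' -> _|->]; last by rewrite eqxx.
move/rowP/(_ t'): vM; rewrite !mxE => vMt.
by rewrite -[RHS]vMt; apply: eq_bigr => j _; rewrite mxE.
Qed.

Lemma sum_mul_delta (R : nzRingType) m (c : 'I_m -> R) j :
  \sum_k c k * (k == j)%:R = c j.
Proof.
rewrite (bigD1 j) //= eqxx mulr1 big1 ?addr0 // => k /negbTE ->.
by rewrite mulr0.
Qed.

Lemma sum_sq_gt0 (R : realDomainType) m (c : 'I_m -> R) :
  (exists j, c j != 0) -> 0 < \sum_j c j ^+ 2.
Proof.
case=> j cj; rewrite lt_def psumr_neq0 => [|k _]; last exact: sqr_ge0.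
rewrite sumr_ge0 ?andbT => [|k _]; last exact: sqr_ge0.
by apply/hasP; exists j; rewrite ?mem_index_enum // lt_def sqrf_eq0 cj sqr_ge0.
Qed.

Lemma sum_weighted_sq_le (R : realDomainType) m (w c : 'I_m -> R) i :
  (forall j, c j != 0 -> w j <= w i) ->
  \sum_j w j * c j ^+ 2 <= w i * \sum_j c j ^+ 2.
Proof.
move=> w_le; rewrite mulr_sumr; apply: ler_sum => j _.
have [->|cj] := eqVneq (c j) 0; first by rewrite expr0n !mulr0.
by rewrite ler_wpM2r ?sqr_ge0 ?w_le.
Qed.

Lemma sum_weighted_sq_ge (R : realDomainType) m (w c : 'I_m -> R) i :
  (forall j, c j != 0 -> w i <= w j) ->
  w i * \sum_j c j ^+ 2 <= \sum_j w j * c j ^+ 2.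
Proof.
move=> w_ge; have := @sum_weighted_sq_le _ _ (fun j => - w j) c i.
rewrite mulNr (eq_bigr (fun j => - (w j * c j ^+ 2))) => [|j _]; last by rewrite mulNr.
by rewrite sumrN lerN2; apply=> j /w_ge; rewrite lerN2.
Qed.

Lemma lt_double_of_sq_gap {R : realFieldType} {a b gamma delta : R} :
  2 * delta ^+ 2 < gamma ^+ 2 -> gamma ^+ 2 * (a - b) <= delta ^+ 2 * a -> 0 < a ->
  a < 2 * b.
Proof. by move=> gap kept a_gt0; nra. Qed.

Lemma gap_of_lt_div_sqrt2 {R : rcfType} {gamma delta : R} :
  0 < delta -> delta < gamma / Num.sqrt 2 -> 0 < gamma /\ 2 * delta ^+ 2 < gamma ^+ 2.
Proof.
move=> delta_gt0; have sqrt2_gt0 : 0 < Num.sqrt 2 :> R by rewrite sqrtr_gt0.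
rewrite ltr_pdivlMr // => lt_gamma; have gamma_gt0 : 0 < gamma.
  by apply: lt_trans lt_gamma; rewrite mulr_gt0.
split=> //; rewrite -[X in X * _ < _](@sqr_sqrtr _ 2) // -exprMn mulrC.
by rewrite ltr_pXn2r // nnegrE ltW // mulr_gt0.
Qed.

Lemma rayleigh_quotient_gap (R : realFieldType) (a b A B gamma delta : R) :
  0 < gamma -> 2 * delta ^+ 2 < gamma ^+ 2 -> 0 < a -> b <= a ->
  gamma ^+ 2 * (a - b) <= delta ^+ 2 * a -> gamma * `|A - B| <= delta ^+ 2 * a ->
  `|A| <= delta * a -> 0 < b /\ `|B / b - A / a| <= 4 / gamma * delta ^+ 2.
Proof.
move=> gamma_gt0 gap a_gt0 b_le_a kept AB_close A_le.
have delta_ge0 : 0 <= delta by move: (normr_ge0 A) A_le a_gt0; nra.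
have delta_le : delta <= gamma by move: delta_ge0 gamma_gt0 gap; nra.
have a_lt2b := lt_double_of_sq_gap gap kept a_gt0.
have b_gt0 : 0 < b by lra.
have ab_ge0 : 0 <= a - b by rewrite subr_ge0.
split=> //.
have v_le : `|A / a| <= delta by rewrite normrM normfV (gtr0_norm a_gt0) ler_pdivrMr.
have split : (B / b - A / a) * b = (B - A) + A / a * (a - b) by field; rewrite ?gt_eqF.
have w_le : `|B / b - A / a| * b <= `|A - B| + delta * (a - b).
  rewrite -[X in _ * X](gtr0_norm b_gt0) -normrM split distrC.
  apply: le_trans (ler_normD _ _) _.
  by rewrite lerD2l normrM (ger0_norm ab_ge0) ler_wpM2r.
have tail : gamma * (delta * (a - b)) <= delta ^+ 2 * a.
  apply: le_trans kept; rewrite expr2 -mulrA.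
  by apply: ler_wpM2l; [exact: ltW | exact: ler_wpM2r].
have : gamma * (`|B / b - A / a| * b) <= 4 * delta ^+ 2 * b.
  apply: le_trans (ler_wpM2l (ltW gamma_gt0) w_le) _.
  by rewrite mulrDr; move: (sqr_ge0 delta); nra.
rewrite mulrA ler_pM2r // => gap_b.
by rewrite mulrAC ler_pdivlMr // mulrC.
Qed.

Section Spectral.
Context {R : realType} {V : lmodType R} {ip : V -> V -> R} {D : V -> Prop}
  {q : V -> V -> R} {g : nat -> V} {nu : nat -> R}.
Hypotheses (ipP : inner_product ip) (D_subspace : subspace D)
  (q_sym_bilinear : sym_bilinear_on D q)
  (g_orthonormal : forall i j : nat, (1 <= i)%N -> (1 <= j)%N ->
     ip (g i) (g j) = (i == j)%:R)
  (g_complete : forall x : V,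
     converges_to ip (fun n => \sum_(1 <= i < n) ip x (g i) *: g i) x)
  (g_eigvec : forall i : nat, (1 <= i)%N -> form_eigvec ip D q (g i) (nu i)).

Lemma g_orthonormal_on {r : seq nat} : {in r, forall k, 0 < k}%N ->
  {in r &, forall i j, ip (g i) (g j) = (i == j)%:R}.
Proof. by move=> r_pos i j /r_pos i_pos /r_pos j_pos; apply: g_orthonormal. Qed.

Lemma g_in_domain {r : seq nat} : {in r, forall k, 0 < k}%N -> {in r, forall k, D (g k)}.
Proof. by move=> r_pos k /r_pos /g_eigvec []. Qed.

Lemma form_eig_sumr (r : seq nat) (a : nat -> R) x :
  {in r, forall k, 0 < k}%N -> D x ->
  q x (\sum_(k <- r) a k *: g k) = \sum_(k <- r) a k * nu k * ip x (g k).
Proof.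
move=> r_pos Dx; have Dg := g_in_domain r_pos.
rewrite (formC q_sym_bilinear) //; last exact: (subspace_sum D_subspace).
rewrite (form_suml D_subspace q_sym_bilinear) // !big_seq; apply: eq_bigr => k kr.
by case: (g_eigvec k (r_pos k kr)) => _ ->; rewrite // (ipC ipP) mulrA.
Qed.

Lemma parseval_approx x n0 e : 0 < e ->
  exists2 n, (n0 <= n)%N & ip x x - \sum_(1 <= k < n) ip x (g k) ^+ 2 < e.
Proof.
move=> e_gt0; have sqrte_gt0 : 0 < Num.sqrt e by rewrite sqrtr_gt0.
have [n1 conv] := g_complete x _ sqrte_gt0.
exists (maxn n0 n1); first exact: leq_maxl.
have := conv _ (leq_maxr n0 n1); rewrite /hnorm ltr_sqrt // -opprB (ipNN ipP).
have orth := g_orthonormal_on (index_iota_gt0 1 (maxn n0 n1) isT).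
by rewrite (ip_sub_proj_orthonormal_sq ipP (iota_uniq _ _) orth).
Qed.

Section Window.
Context {N m : nat} {gamma : R}.
Hypotheses (N_gt0 : (0 < N)%N) (gamma_gt0 : 0 < gamma)
  (nu_mono : forall i j : nat, (1 <= i)%N -> (i <= j)%N -> nu i <= nu j)
  (nu_above : gamma <= nu (N + m)%N) (nu_below : (2 <= N)%N -> nu N.-1 <= - gamma).

Local Notation Pi := (proj_span ip g N m).

Lemma sq_gap_outside_window k :
  (0 < k)%N -> ~~ (N <= k < N + m)%N -> gamma ^+ 2 <= nu k ^+ 2.
Proof.
move=> k_gt0 k_out; have [kN|Nk] := ltnP k N.
  have N2 : (2 <= N)%N by apply: leq_ltn_trans kN.
  have : nu k <= nu N.-1 by apply: nu_mono; rewrite // -ltnS prednK.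
  by move: (nu_below N2) gamma_gt0; nra.
have Nmk : (N + m <= k)%N by rewrite leqNgt; move: k_out; rewrite Nk.
have : nu (N + m)%N <= nu k by apply: nu_mono; rewrite // addn_gt0 N_gt0.
by move: nu_above gamma_gt0; nra.
Qed.

Let window_gt0 : {in index_iota N (N + m), forall k, 0 < k}%N := index_iota_gt0 _ _ N_gt0.
Let window_orthonormal := g_orthonormal_on window_gt0.

Lemma ip_proj_span x : ip (Pi x) (Pi x) = \sum_(N <= k < N + m) ip x (g k) ^+ 2.
Proof. exact: (ip_sum_orthonormal_sq ipP (iota_uniq _ _) window_orthonormal). Qed.

Lemma ip_sub_proj_span x :
  ip (x - Pi x) (x - Pi x) = ip x x - \sum_(N <= k < N + m) ip x (g k) ^+ 2.
Proof. exact: (ip_sub_proj_orthonormal_sq ipP (iota_uniq _ _) window_orthonormal). Qed.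

Lemma proj_span_in_domain x : D (Pi x).
Proof. exact/(subspace_sum D_subspace)/g_in_domain. Qed.

Lemma form_proj_span x : D x ->
  q (Pi x) (Pi x) = \sum_(N <= k < N + m) nu k * ip x (g k) ^+ 2.
Proof.
move=> Dx; rewrite {2}/proj_span form_eig_sumr //; last exact: proj_span_in_domain.
apply: eq_big_seq => k kN; rewrite /proj_span.
by rewrite (ip_sum_orthonormal ipP (iota_uniq _ _) window_orthonormal) //; ring.
Qed.

Lemma form_sub_proj_span x : D x -> q x x - q (Pi x) (Pi x) = q x (x - Pi x).
Proof.
move=> Dx; set P := Pi x; set r := x - P.
have DP : D P := proj_span_in_domain x.
have Dr : D r by apply: subspaceB.
have qC := formC q_sym_bilinear; have qDl := formDl q_sym_bilinear.
have qrP : q r P = 0.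
  rewrite form_eig_sumr // big_seq big1 // => k kN.
  by rewrite (ip_sub_proj_orthonormal ipP (iota_uniq _ _) window_orthonormal) // mulr0.
have ex : x = P + r by rewrite addrC subrK.
have qxr : q x r = q r r by rewrite {1}ex qDl // (qC P) // qrP add0r.
have qxP : q x P = q P P by rewrite {1}ex qDl // qrP addr0.
by rewrite {1}ex qDl // (qC P) // qxP (qC r) // qxr addrC addKr.
Qed.

Section WindowFormBound.
Context {delta : R} {x : V}.
Hypotheses (delta_ge0 : 0 <= delta) (Dx : D x)
  (q_bounded : forall h, D h -> `|q x h| <= delta * hnorm ip x * hnorm ip h).

Lemma sum_sq_eig_coef_le (r : seq nat) : uniq r -> {in r, forall k, 0 < k}%N ->
  \sum_(k <- r) (nu k * ip x (g k)) ^+ 2 <= delta ^+ 2 * ip x x.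
Proof.
move=> r_uniq r_pos; set S := \sum_(k <- r) _.
set h := \sum_(k <- r) (nu k * ip x (g k)) *: g k.
have hh : ip h h = S by apply: (ip_sum_orthonormal_sq ipP) => //; exact: g_orthonormal_on.
have qxh : q x h = S.
  rewrite form_eig_sumr //; apply: eq_bigr => k _; rewrite expr2; ring.
rewrite -(hnorm_sq ipP x) -exprMn; apply: le_sqr_of_le_mul_sqrt.
  by rewrite mulr_ge0 ?sqrtr_ge0.
have -> : Num.sqrt S = hnorm ip h by rewrite /hnorm hh.
rewrite -{1}qxh; apply: le_trans (ler_norm _) (q_bounded _ _).
exact/(subspace_sum D_subspace)/g_in_domain.
Qed.

Lemma sum_sq_coef_outside_window_le n :
  gamma ^+ 2 * \sum_(1 <= k < n | ~~ (N <= k < N + m)%N) ip x (g k) ^+ 2 <=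
  delta ^+ 2 * ip x x.
Proof.
set out := [seq k <- index_iota 1 n | ~~ (N <= k < N + m)%N].
have out_gt0 : {in out, forall k, 0 < k}%N.
  by move=> k; rewrite mem_filter => /andP [_]; apply: index_iota_gt0.
apply: le_trans (sum_sq_eig_coef_le _ (filter_uniq _ (iota_uniq _ _)) out_gt0).
rewrite big_filter mulr_sumr [leLHS]big_mkcond [leRHS]big_mkcond /= !big_seq.
apply: ler_sum => k /(index_iota_gt0 1 n isT) k_gt0.
case: ifP => // k_out; rewrite exprMn ler_wpM2r ?sqr_ge0 //.
exact: sq_gap_outside_window.
Qed.

Lemma proj_span_residual_le :
  gamma ^+ 2 * ip (x - Pi x) (x - Pi x) <= delta ^+ 2 * ip x x.
Proof.
apply/ler_addgt0Pr => e e_gt0.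
have gamma2_gt0 : 0 < gamma ^+ 2 by rewrite exprn_gt0.
have [n Nmn approx] := parseval_approx x (N + m)%N _ (divr_gt0 e_gt0 gamma2_gt0).
rewrite (bigID (fun k => N <= k < N + m)%N) /= big_nat_window // in approx.
have := sum_sq_coef_outside_window_le n.
rewrite -(ltr_pM2l gamma2_gt0) mulrCA divff ?mulr1 ?gt_eqF // in approx.
rewrite ip_sub_proj_span; lra.
Qed.

Lemma hnorm_sub_proj_span_le : gamma * hnorm ip (x - Pi x) <= delta * hnorm ip x.
Proof.
have hnorm_ge0 y : 0 <= hnorm ip y by apply: sqrtr_ge0.
rewrite -(ler_pXn2r (isT : (0 < 2)%N)) ?nnegrE ?mulr_ge0 ?hnorm_ge0 //; last exact: ltW.
by rewrite !exprMn !(hnorm_sq ipP); exact: proj_span_residual_le.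
Qed.

Lemma form_proj_span_dist :
  gamma * `|q x x - q (Pi x) (Pi x)| <= delta ^+ 2 * ip x x.
Proof.
rewrite form_sub_proj_span //.
apply: le_trans (_ : gamma * (delta * hnorm ip x * hnorm ip (x - Pi x)) <= _).
  by rewrite ler_pM2l // q_bounded //; apply: subspaceB => //; exact: proj_span_in_domain.
rewrite mulrCA; apply: le_trans (ler_wpM2l _ hnorm_sub_proj_span_le) _.
  by rewrite mulr_ge0 ?sqrtr_ge0.
by rewrite -expr2 exprMn (hnorm_sq ipP).
Qed.

Lemma rayleigh_proj_span_gap : 2 * delta ^+ 2 < gamma ^+ 2 -> 0 < ip x x ->
  0 < ip (Pi x) (Pi x) /\
  `|rayleigh ip q (Pi x) - rayleigh ip q x| <= 4 / gamma * delta ^+ 2.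
Proof.
move=> gap a_gt0; have kept := proj_span_residual_le.
rewrite ip_sub_proj_span -ip_proj_span in kept.
have b_le_a : ip (Pi x) (Pi x) <= ip x x.
  by rewrite -subr_ge0 ip_proj_span -ip_sub_proj_span; apply: ip_ge0.
have A_le : `|q x x| <= delta * ip x x.
  by rewrite -(hnorm_sq ipP) expr2 mulrA; apply: q_bounded.
by apply: rayleigh_quotient_gap => //; exact: form_proj_span_dist.
Qed.

Lemma hnorm_proj_span_sub_le :
  hnorm ip (Pi x - x) <= Num.sqrt 2 * delta / gamma * hnorm ip x.
Proof.
rewrite -opprB (hnormN ipP) -(ler_pM2l gamma_gt0).
apply: le_trans hnorm_sub_proj_span_le _.
have -> : gamma * (Num.sqrt 2 * delta / gamma * hnorm ip x) =
  Num.sqrt 2 * (delta * hnorm ip x) by field; rewrite gt_eqF.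
rewrite ler_peMl ?mulr_ge0 ?sqrtr_ge0 //.
by rewrite -[leLHS]sqrtr1 ler_sqrt // ler1n.
Qed.

End WindowFormBound.

Section TrialSubspace.
Context {f : 'I_m -> V} {xi : 'I_m -> R} {delta : R}.
Hypotheses (f_in_domain : forall j, D (f j))
  (f_orthonormal : forall j k, ip (f j) (f k) = (j == k)%:R)
  (f_eigvec : forall j phi, span_fam f phi -> q (f j) phi = xi j * ip (f j) phi)
  (xi_mono : forall j k : 'I_m, (j <= k)%N -> xi j <= xi k)
  (delta_ge0 : 0 <= delta) (gap : 2 * delta ^+ 2 < gamma ^+ 2)
  (q_bounded : forall h phi, D h -> span_fam f phi ->
     `|q phi h| <= delta * hnorm ip phi * hnorm ip h).

Local Notation comb c := (\sum_(j < m) c j *: f j).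

Let f_orthonormal_on : {in index_enum 'I_m &, forall j k, ip (f j) (f k) = (j == k)%:R}.
Proof. by move=> j k _ _; apply: f_orthonormal. Qed.

Lemma comb_in_domain c : D (comb c).
Proof. by apply: (subspace_sum D_subspace) => j _. Qed.

Lemma ip_comb c : ip (comb c) (comb c) = \sum_j c j ^+ 2.
Proof. exact: (ip_sum_orthonormal_sq ipP (index_enum_uniq _) f_orthonormal_on). Qed.

Lemma form_comb c : q (comb c) (comb c) = \sum_j xi j * c j ^+ 2.
Proof.
rewrite (form_suml D_subspace q_sym_bilinear) => [|j _|]; last exact: comb_in_domain.
  2: exact: f_in_domain.
apply: eq_bigr => j _; rewrite f_eigvec; last by exists c.
rewrite (ipC ipP) (ip_sum_orthonormal ipP (index_enum_uniq _) f_orthonormal_on) //.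
by rewrite mulrCA -expr2.
Qed.

Lemma ip_proj_comb c :
  ip (Pi (comb c)) (Pi (comb c)) = \sum_(l < m) ip (comb c) (g (N + l)) ^+ 2.
Proof. by rewrite ip_proj_span big_nat_shift. Qed.

Lemma form_proj_comb c : q (Pi (comb c)) (Pi (comb c)) =
  \sum_(l < m) nu (N + l)%N * ip (comb c) (g (N + l)) ^+ 2.
Proof. by rewrite form_proj_span ?big_nat_shift //; exact: comb_in_domain. Qed.

Lemma minmax_witness_le (i : 'I_m) : exists2 c, exists j, c j != 0 &
  q (comb c) (comb c) <= xi i * ip (comb c) (comb c) /\
  nu (N + i)%N * ip (Pi (comb c)) (Pi (comb c)) <= q (Pi (comb c)) (Pi (comb c)).
Proof.
(* c_j = 0 for j > i, and comb c is orthogonal to g_(N+t) for t < i. *)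
pose L (t j : 'I_m) := if (t < i)%N then ip (f j) (g (N + t)) else (j == t)%:R.
have [c c_neq0 c_sol] := exists_nonzero_sol_except L i.
exists c => //; rewrite ip_comb form_comb ip_proj_comb form_proj_comb; split.
  apply: sum_weighted_sq_le => j cj; apply: xi_mono; rewrite leqNgt.
  apply: contra cj => ij; have := c_sol j; rewrite /L ltnNge (ltnW ij) sum_mul_delta.
  by move=> -> //; rewrite neq_ltn ij orbT.
apply: sum_weighted_sq_ge => l cl; apply: nu_mono; rewrite ?addn_gt0 ?N_gt0 //.
rewrite leq_add2l leqNgt; apply: contra cl => li.
by have := c_sol l; rewrite /L li -(ip_suml ipP) => -> //; rewrite neq_ltn li.
Qed.

Lemma minmax_witness_ge (i : 'I_m) : exists2 c, exists j, c j != 0 &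
  xi i * ip (comb c) (comb c) <= q (comb c) (comb c) /\
  q (Pi (comb c)) (Pi (comb c)) <= nu (N + i)%N * ip (Pi (comb c)) (Pi (comb c)).
Proof.
(* c_j = 0 for j < i, and comb c is orthogonal to g_(N+t) for t > i. *)
pose L (t j : 'I_m) := if (t < i)%N then (j == t)%:R else ip (f j) (g (N + t)).
have [c c_neq0 c_sol] := exists_nonzero_sol_except L i.
exists c => //; rewrite ip_comb form_comb ip_proj_comb form_proj_comb; split.
  apply: sum_weighted_sq_ge => j cj; apply: xi_mono; rewrite leqNgt.
  apply: contra cj => ji; have := c_sol j; rewrite /L ji sum_mul_delta.
  by move=> -> //; rewrite neq_ltn ji.
apply: sum_weighted_sq_le => l cl; apply: nu_mono; rewrite ?addn_gt0 ?N_gt0 //.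
rewrite leq_add2l leqNgt; apply: contra cl => il.
have := c_sol l; rewrite /L ltnNge (ltnW il) -(ip_suml ipP) => -> //.
by rewrite neq_ltn il orbT.
Qed.

Lemma rayleigh_proj_comb_gap c : (exists j, c j != 0) ->
  [/\ 0 < ip (comb c) (comb c), 0 < ip (Pi (comb c)) (Pi (comb c)) &
   `|rayleigh ip q (Pi (comb c)) - rayleigh ip q (comb c)| <= 4 / gamma * delta ^+ 2].
Proof.
move=> c_neq0; have a_gt0 : 0 < ip (comb c) (comb c) by rewrite ip_comb sum_sq_gt0.
have q_bounded_c h : D h -> `|q (comb c) h| <= delta * hnorm ip (comb c) * hnorm ip h.
  by move=> Dh; apply: q_bounded => //; exists c.
have [] := rayleigh_proj_span_gap delta_ge0 (comb_in_domain c) q_bounded_c gap a_gt0.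
by split.
Qed.

Lemma eigenvalue_window_close (i : 'I_m) :
  `|nu (N + i)%N - xi i| <= 4 / gamma * delta ^+ 2.
Proof.
rewrite ler_norml; apply/andP; split.
  have [c /rayleigh_proj_comb_gap [a_gt0 b_gt0] + [xi_le nu_ge]] := minmax_witness_ge i.
  rewrite -le_rayleigh // in xi_le; rewrite -rayleigh_le // in nu_ge.
  by rewrite ler_norml => /andP []; lra.
have [c /rayleigh_proj_comb_gap [a_gt0 b_gt0] + [xi_ge nu_le]] := minmax_witness_le i.
rewrite -rayleigh_le // in xi_ge; rewrite -le_rayleigh // in nu_le.
by rewrite ler_norml => /andP []; lra.
Qed.

End TrialSubspace.
End Window.
End Spectral.

Theorem proposition3p1 (R : realType) (V : lmodType R)
  (ip : V -> V -> R) (D : V -> Prop) (q : V -> V -> R)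
  (g : nat -> V) (nu : nat -> R) (N m : nat)
  (f : 'I_m -> V) (xi : 'I_m -> R) (gamma delta : R) :
  (* the Hilbert space and the form q with domain D *)
  hilbert_space ip -> subspace D -> dense ip D ->
  sym_bilinear_on D q -> semibounded_below ip D q -> closed_form ip D q ->
  (* discrete spectrum nu_1 <= nu_2 <= ... with orthonormal eigenbasis g *)
  orthonormal_basis ip g ->
  (forall i : nat, (1 <= i)%N -> form_eigvec ip D q (g i) (nu i)) ->
  (forall i j : nat, (1 <= i)%N -> (i <= j)%N -> nu i <= nu j) ->
  (forall M : R, exists i : nat, M < nu i) ->
  (0 < N)%N -> (0 < m)%N ->
  (* F = span f, an m-dimensional subspace of D; f is an orthonormal basis of F
     of eigenvectors of q restricted to F, with eigenvalues xi_1 <= ... <= xi_m *)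
  (forall j : 'I_m, D (f j)) ->
  (forall j k : 'I_m, ip (f j) (f k) = (j == k)%:R) ->
  (forall (j : 'I_m) (phi : V), span_fam f phi -> q (f j) phi = xi j * ip (f j) phi) ->
  (forall j k : 'I_m, (j <= k)%N -> xi j <= xi k) ->
  (* (H1) *)
  0 < delta -> delta < gamma / Num.sqrt 2 ->
  (* (H2) *)
  (forall i : 'I_m, `|nu (N + i)%N| <= gamma) ->
  gamma <= nu (N + m)%N ->
  ((2 <= N)%N -> nu N.-1 <= - gamma) ->
  (* (H3) *)
  (forall (g0 phi : V), D g0 -> span_fam f phi ->
     `|q phi g0| <= delta * hnorm ip phi * hnorm ip g0) ->
  (* conclusions (i) and (ii) *)
  (forall i : 'I_m, `|nu (N + i)%N - xi i| <= 4 / gamma * delta ^+ 2) /\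
  (forall phi : V, span_fam f phi ->
     hnorm ip (proj_span ip g N m phi - phi) <= Num.sqrt 2 * delta / gamma * hnorm ip phi).
Proof.
move=> [ipP _] D_subspace _ q_sym _ _ [g_orth g_complete] g_eigvec nu_mono _ N_gt0 _
  f_in_D f_orth f_eig xi_mono delta_gt0 delta_lt _ nu_above nu_below q_bounded.
have [gamma_gt0 gap] := gap_of_lt_div_sqrt2 delta_gt0 delta_lt.
have delta_ge0 := ltW delta_gt0.
split=> [i|_ [c ->]].
  exact: (eigenvalue_window_close ipP D_subspace q_sym g_orth g_complete g_eigvec
    N_gt0 gamma_gt0 nu_mono nu_above nu_below f_in_D f_orth f_eig xi_mono delta_ge0 gap q_bounded).
apply: (hnorm_proj_span_sub_le ipP D_subspace q_sym g_orth g_complete g_eigvec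
  N_gt0 gamma_gt0 nu_mono nu_above nu_below delta_ge0 (comb_in_domain D_subspace f_in_D c)).
by move=> h Dh; apply: q_bounded => //; exists c.
Qed.
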